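(* Let $A$ be an ideal of $D$ such that $A=(I_1I_2\cdots I_m)^{\ast}$ for some finitely many $\ast$-homog ideals $I_1,\dots,I_m$. Then $A=(J_1J_2\cdots J_r)^\ast$ for some $\ast$-homog ideals $J_1,\dots,J_r$ that are mutually $\ast$-comaximal, and this expression is unique up to order: if also $A=(K_1\cdots K_s)^\ast$ with $K_1,\dots,K_s$ mutually $\ast$-comaximal $\ast$-homog ideals, then $r=s$ and after reordering $J_i=K_i$ for all $i$.
   Context: $D$ is an integral domain and $\ast$ is a star operation on $D$ of finite character. A $\ast$-ideal is a nonzero fractional ideal $I$ with $I^\ast=I$; it is of finite type if $I=J^\ast$ for some nonzero finitely generated $J$. A maximal $\ast$-ideal is an integral $\ast$-ideal maximal among proper integral $\ast$-ideals. Ideals $A,B$ are $\ast$-comaximal if $(A+B)^\ast=D$. A $\ast$-homog ideal of $D$ is an integral $\ast$-ideal $I$ of finite type with $I\subsetneq D$ such that $(J+L)^{\ast}\neq D$ for every pair $J,L$ of proper integral $\ast$-ideals of finite type containing $I$. *)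

(* D : idomainType, K := {fraction D} its quotient field.
   Subsets of K are predicates K -> Prop (compared with Leibniz equality;
   functional/propositional extensionality are available). *)
From Stdlib Require Import Permutation.
From HB Require Import structures.
From mathcomp Require Import all_boot all_order all_algebra.
From mathcomp Require Import fraction.
Set Implicit Arguments. Unset Strict Implicit. Unset Printing Implicit Defensive.
Import GRing.Theory.
Local Open Scope ring_scope.

Section StarDefs.
Variable D : idomainType.
Local Notation K := {fraction D}.
Local Notation emb := (@FracField.tofrac D).

Definition kset := K -> Prop.

Definition ksubset (I J : kset) : Prop := forall x, I x -> J x.

Definition Dset : kset := fun y => exists a : D, y = emb a.

Definition submodule (I : kset) : Prop :=
  [/\ I 0, (forall x y, I x -> I y -> I (x + y))
    & (forall (a : D) x, I x -> I (emb a * x))].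

Definition frac_ideal (I : kset) : Prop :=
  [/\ submodule I, (exists x, I x /\ x != 0)
    & exists d : D, d != 0 /\ forall x, I x -> Dset (emb d * x)].

Definition integral (I : kset) : Prop := ksubset I Dset.

Definition principal (x : K) : kset := fun y => exists a : D, y = emb a * x.

Definition kscale (x : K) (I : kset) : kset := fun y => exists z, I z /\ y = x * z.

Definition gen (s : seq K) : kset :=
  fun y => exists f : nat -> D, y = \sum_(i < size s) emb (f i) * s`_i.

Definition fg_ideal (J : kset) : Prop :=
  exists s : seq K, J = gen s /\ exists x, J x /\ x != 0.

Definition isum (I J : kset) : kset := fun y => exists a b, [/\ I a, J b & y = a + b].
Definition iprod (I J : kset) : kset :=
  fun y => exists s : seq (K * K),
    (forall p, List.In p s -> I p.1 /\ J p.2) /\ y = \sum_(p <- s) p.1 * p.2.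
Definition iprodl (l : seq kset) : kset := foldr iprod Dset l.

Definition star_op (star : kset -> kset) : Prop :=
  (forall I, frac_ideal I -> frac_ideal (star I)) /\
  [/\ (forall x, x != 0 -> star (principal x) = principal x),
      (forall x I, x != 0 -> frac_ideal I -> star (kscale x I) = kscale x (star I)),
      (forall I, frac_ideal I -> ksubset I (star I)),
      (forall I J, frac_ideal I -> frac_ideal J -> ksubset I J ->
                   ksubset (star I) (star J))
    & (forall I, frac_ideal I -> star (star I) = star I)].

Definition finite_character (star : kset -> kset) : Prop :=
  forall I, frac_ideal I ->
    star I = (fun y => exists J, [/\ fg_ideal J, ksubset J I & star J y]).

Variable star : kset -> kset.

Definition star_ideal (I : kset) : Prop := frac_ideal I /\ star I = I.

Definition finite_type (I : kset) : Prop :=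
  star_ideal I /\ exists J, fg_ideal J /\ I = star J.

Definition proper_integral (I : kset) : Prop := integral I /\ I <> Dset.

Definition star_comax (A B : kset) : Prop := star (isum A B) = Dset.

Definition star_homog (I : kset) : Prop :=
  [/\ star_ideal I, integral I, finite_type I, I <> Dset &
     forall J L, star_ideal J -> star_ideal L -> finite_type J -> finite_type L ->
       proper_integral J -> proper_integral L -> ksubset I J -> ksubset I L ->
       star (isum J L) <> Dset].

Definition mutually_comax (l : seq kset) : Prop :=
  forall i j, (i < size l)%N -> (j < size l)%N -> i <> j ->
    star_comax (nth Dset l i) (nth Dset l j).

End StarDefs.

From Stdlib Require Import Permutation List.
From Stdlib Require Import FunctionalExtensionality PropExtensionality Classical.
From HB Require Import structures.
From mathcomp Require Import all_boot all_order all_algebra.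
From mathcomp Require Import fraction generic_quotient ring.
Set Implicit Arguments. Unset Strict Implicit. Unset Printing Implicit Defensive.
Import GRing.Theory.
Local Open Scope ring_scope.

(* For a *-homog ideal I, the set M_I of all x in D with (I + xD)^* <> D is the unique
   maximal *-ideal containing I: homogeneity makes it closed under sums, finite character
   makes it a *-ideal, and it is prime. If two *-homog ideals I, J are not *-comaximal then
   M_I = M_J and (I J)^* is again *-homog with the same M; merging such factors yields a
   factorization into mutually *-comaximal ones. In such a factorization of A, the factor J
   is recovered from A as the set of x in D with x y in A for some y outside M_J, because
   each other factor contains such a y; this gives uniqueness. *)

Section OrderedPairs.
Variables (T : Type) (R : T -> T -> Prop).

Lemma ForallOrdPairs_consE x l :
  ForallOrdPairs R (x :: l) <-> (forall y, In y l -> R x y) /\ ForallOrdPairs R l.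
Proof.
split=> [h|[h1 h2]]; last by constructor => //; apply/Forall_forall.
by inversion h; split => //; apply/Forall_forall.
Qed.

Lemma ForallOrdPairs_NoDup l :
  (forall x, In x l -> ~ R x x) -> ForallOrdPairs R l -> NoDup l.
Proof.
elim: l => [|x l IH] irr; first by constructor.
move/ForallOrdPairs_consE=> [hx hl]; constructor.
- by move=> /hx; apply: irr; left.
- by apply: IH => // y hy; apply: irr; right.
Qed.

Lemma In_Permutation_cons (x : T) l : In x l -> exists rest, Permutation l (x :: rest).
Proof.
move=> /(in_split x l) [l1 [l2 ->]]; exists (l1 ++ l2).
by apply: Permutation_sym; apply: Permutation_middle.
Qed.

Lemma nth_In_seq (x0 : T) l i : (i < size l)%N -> In (nth x0 l i) l.
Proof. by elim: l i => [|x l IH] [|i] //= hi; [left|right; apply: IH]. Qed.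

Lemma In_nth_seq (x0 : T) l y : In y l -> exists2 i, (i < size l)%N & nth x0 l i = y.
Proof.
elim: l => [|x l IH] //= [<-|/IH [i hi <-]]; first by exists 0%N.
by exists i.+1.
Qed.

Hypothesis R_sym : forall x y, R x y -> R y x.

Lemma ForallOrdPairs_perm l l' :
  Permutation l l' -> ForallOrdPairs R l -> ForallOrdPairs R l'.
Proof.
elim=> [//|x l1 l2 p12 IH|x y l0|l1 l2 l3 _ IH12 _ IH23];
  rewrite ?ForallOrdPairs_consE.
- move=> [hx h]; split; last exact: IH.
  by move=> y /(Permutation_in _ (Permutation_sym p12)); apply: hx.
- move=> [hy [hx h]]; split; [|split] => //.
  + by move=> z [<-|hz]; [apply: R_sym; apply: hy; left|apply: hx].
  + by move=> z hz; apply: hy; right.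
- by move=> /IH12 /IH23.
Qed.

Lemma ForallOrdPairs_nthP (x0 : T) l :
  ForallOrdPairs R l <-> forall i j, (i < size l)%N -> (j < size l)%N -> i <> j ->
    R (nth x0 l i) (nth x0 l j).
Proof.
split.
- elim: l => [|x l IH] //= /ForallOrdPairs_consE [hx hl] [|i] [|j] //= hi hj hij.
  + exact/hx/nth_In_seq.
  + exact/R_sym/hx/nth_In_seq.
  + by apply: IH => // e; apply: hij; rewrite e.
- elim: l => [|x l IH] h; first by constructor.
  apply/ForallOrdPairs_consE; split.
  + by move=> y /(In_nth_seq x0) [j hj <-]; apply: (h 0%N j.+1).
  + by apply: IH => i j hi hj hij; apply: (h i.+1 j.+1) => // -[].
Qed.

End OrderedPairs.

Section IdealArithmetic.
Variable D : idomainType.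
Local Notation K := {fraction D}.
Local Notation emb := (@FracField.tofrac D).
Local Notation kset := (kset D).
Local Notation DD := (@Dset D).
Implicit Types (I J L X : kset) (x y z : K) (s t : seq K).

Lemma kset_ext I J : (forall x, I x <-> J x) -> I = J.
Proof.
move=> IJ; apply: functional_extensionality => x.
exact: propositional_extensionality.
Qed.

Lemma ksubset_antisym I J : ksubset I J -> ksubset J I -> I = J.
Proof. by move=> IJ JI; apply: kset_ext => x; split; [apply: IJ|apply: JI]. Qed.

(* Writing x as the class of a ratio n / d, the product d x is the class of n. *)
Lemma Dset_denom x : exists2 d : D, d != 0 & Dset (emb d * x).
Proof.
elim/quotW: x => r; exists (frac r).2; first exact: denom_ratioP.
exists (frac r).1.
rewrite [emb _]piE [emb (frac r).1]piE -[_ * _]/(FracField.mul _ _) -FracField.pi_mul.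
apply/eqmodP; rewrite /= FracField.equivfE.
rewrite /FracField.mulf !numden_Ratio ?mulf_neq0 ?oner_eq0 ?denom_ratioP //.
by rewrite mulr1 mul1r mulrC.
Qed.

Lemma Dset_tofrac (a : D) : Dset (emb a). Proof. by exists a. Qed.
Lemma Dset0 : Dset (0 : K). Proof. by exists 0; rewrite rmorph0. Qed.
Lemma Dset1 : Dset (1 : K). Proof. by exists 1; rewrite rmorph1. Qed.
Lemma DsetD x y : Dset x -> Dset y -> Dset (x + y).
Proof. by move=> [a ->] [b ->]; exists (a + b); rewrite rmorphD. Qed.
Lemma DsetM x y : Dset x -> Dset y -> Dset (x * y).
Proof. by move=> [a ->] [b ->]; exists (a * b); rewrite rmorphM. Qed.

Lemma Dset_submodule : submodule DD.
Proof. by split=> [|x y|a x]; [exact: Dset0|exact: DsetD|apply/DsetM/Dset_tofrac]. Qed.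

Section Submodule.
Variable I : kset.
Hypothesis I_sub : submodule I.

Lemma submodule0 : I 0. Proof. by case: I_sub. Qed.
Lemma submoduleD x y : I x -> I y -> I (x + y). Proof. by case: I_sub => _ + _; apply. Qed.
Lemma submoduleM x y : Dset y -> I x -> I (y * x).
Proof. by case: I_sub => _ _ h [a ->]; apply: h. Qed.
Lemma submoduleMr x y : Dset y -> I x -> I (x * y).
Proof. by rewrite mulrC; apply: submoduleM. Qed.

End Submodule.

Definition int_submodule I := submodule I /\ integral I.
Definition int_ideal I := [/\ submodule I, integral I & exists x, I x /\ x != 0].

Lemma int_ideal_submodule I : int_ideal I -> int_submodule I. Proof. by case. Qed.

Lemma int_ideal_frac I : int_ideal I -> frac_ideal I.
Proof.
case=> I_sub I_int I_nz; split => //; exists 1; split; first exact: oner_neq0.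
by move=> x /I_int; rewrite rmorph1 mul1r.
Qed.

Lemma Dset_int_ideal : int_ideal DD.
Proof. by split=> //; [exact: Dset_submodule|exists 1; split; [exact: Dset1|exact: oner_neq0]]. Qed.

Lemma Dset_principal1 : DD = principal 1.
Proof. by apply: kset_ext => y; split=> -[a ->]; exists a; rewrite ?mulr1. Qed.

Lemma isum_submodule I J : submodule I -> submodule J -> submodule (isum I J).
Proof.
move=> I_sub J_sub; split.
- by exists 0, 0; rewrite addr0; split => //; apply: submodule0.
- move=> _ _ [a [b [Ia Jb ->]]] [a' [b' [Ia' Jb' ->]]].
  by exists (a + a'), (b + b'); rewrite addrACA; split => //; apply: submoduleD.
- move=> c _ [a [b [Ia Jb ->]]]; exists (emb c * a), (emb c * b); rewrite mulrDr.
  by split => //; apply: submoduleM => //; apply: Dset_tofrac.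
Qed.

Lemma isum_integral I J : integral I -> integral J -> integral (isum I J).
Proof. by move=> I_int J_int _ [a [b [/I_int aD /J_int bD ->]]]; apply: DsetD. Qed.

Lemma isum_subl I J : J 0 -> ksubset I (isum I J).
Proof. by move=> J0 x Ix; exists x, 0; rewrite addr0. Qed.

Lemma isum_subr I J : I 0 -> ksubset J (isum I J).
Proof. by move=> I0 x Jx; exists 0, x; rewrite add0r. Qed.

Lemma isum_int_ideal I J : int_ideal I -> int_submodule J -> int_ideal (isum I J).
Proof.
case=> I_sub I_int [x [Ix x_nz]] [J_sub J_int].
split; [exact: isum_submodule|exact: isum_integral|].
by exists x; split => //; apply: isum_subl => //; apply: submodule0.
Qed.

Lemma isum_sub X I J :
  submodule X -> ksubset I X -> ksubset J X -> ksubset (isum I J) X.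
Proof. by move=> X_sub IX JX _ [a [b [/IX Xa /JX Xb ->]]]; apply: submoduleD. Qed.

Lemma isumC I J : isum I J = isum J I.
Proof. by apply: kset_ext => y; split=> -[a [b [Ia Jb ->]]]; exists b, a; rewrite addrC. Qed.

Lemma isumS I I' J J' : ksubset I I' -> ksubset J J' -> ksubset (isum I J) (isum I' J').
Proof. by move=> II' JJ' _ [a [b [Ia Jb ->]]]; exists a, b; split; [apply: II'|apply: JJ'|]. Qed.

Lemma iprod_ind I J (P : kset) : P 0 -> (forall x y, P x -> P y -> P (x + y)) ->
  (forall a b, I a -> J b -> P (a * b)) -> ksubset (iprod I J) P.
Proof.
move=> P0 PD PM _ [s [sIJ ->]]; elim: s sIJ => [|p s IH] sIJ; first by rewrite big_nil.
rewrite big_cons; apply: PD; last by apply: IH => q sq; apply: sIJ; right.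
by have [Ip Jp] := sIJ p (or_introl erefl); apply: PM.
Qed.

Lemma iprod_mul I J a b : I a -> J b -> iprod I J (a * b).
Proof. by move=> Ia Jb; exists [:: (a, b)]; rewrite big_seq1; split=> // p [<-|[]]. Qed.

Lemma iprod0 I J : iprod I J 0.
Proof. by exists [::]; rewrite big_nil. Qed.

Lemma iprodD I J x y : iprod I J x -> iprod I J y -> iprod I J (x + y).
Proof.
move=> [s [sIJ ->]] [t [tIJ ->]]; exists (s ++ t); rewrite big_cat; split => //.
by move=> p /(in_app_or s t p) [/sIJ|/tIJ].
Qed.

Lemma iprod_submodule I J : submodule I -> submodule (iprod I J).
Proof.
move=> I_sub; split=> [|x y|c x]; [exact: iprod0|exact: iprodD|].
move: x; apply: (@iprod_ind I J (fun y => iprod I J (emb c * y))).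
- by rewrite mulr0; apply: iprod0.
- by move=> x y; rewrite mulrDr; apply: iprodD.
- move=> a b Ia Jb; rewrite mulrA; apply: iprod_mul => //.
  by apply: submoduleM => //; apply: Dset_tofrac.
Qed.

Lemma iprod_integral I J : integral I -> integral J -> integral (iprod I J).
Proof.
move=> I_int J_int; apply: iprod_ind; [exact: Dset0|exact: DsetD|].
by move=> a b /I_int aD /J_int bD; apply: DsetM.
Qed.

Lemma iprod_int_ideal I J : int_ideal I -> int_ideal J -> int_ideal (iprod I J).
Proof.
case=> I_sub I_int [x [Ix x_nz]] [J_sub J_int [y [Jy y_nz]]].
split; [exact: iprod_submodule|exact: iprod_integral|].
by exists (x * y); split; [apply: iprod_mul|apply: mulf_neq0].
Qed.

Lemma iprodS I I' J J' : ksubset I I' -> ksubset J J' -> ksubset (iprod I J) (iprod I' J').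
Proof.
move=> II' JJ'; apply: iprod_ind; [exact: iprod0|exact: iprodD|].
by move=> a b Ia Jb; apply: iprod_mul; [apply: II'|apply: JJ'].
Qed.

Lemma iprodC I J : iprod I J = iprod J I.
Proof.
suff sub I' J' : ksubset (iprod I' J') (iprod J' I') by apply: ksubset_antisym.
apply: iprod_ind; [exact: iprod0|exact: iprodD|].
by move=> a b Ia Jb; rewrite mulrC; apply: iprod_mul.
Qed.

Lemma iprodA_sub I J L : ksubset (iprod (iprod I J) L) (iprod I (iprod J L)).
Proof.
apply: iprod_ind; [exact: iprod0|exact: iprodD|] => p q + Lq.
apply: (@iprod_ind I J (fun p => iprod I (iprod J L) (p * q))).
- by rewrite mul0r; apply: iprod0.
- by move=> x y; rewrite mulrDl; apply: iprodD.
- by move=> a b Ia Jb; rewrite -mulrA; apply: iprod_mul => //; apply: iprod_mul.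
Qed.

Lemma iprodA I J L : iprod (iprod I J) L = iprod I (iprod J L).
Proof.
apply: ksubset_antisym; first exact: iprodA_sub.
by move=> y; rewrite iprodC => /iprodA_sub; rewrite iprodC => /iprodA_sub; rewrite iprodC.
Qed.

Lemma iprod_subl I J : submodule I -> integral J -> ksubset (iprod I J) I.
Proof.
move=> I_sub J_int; apply: iprod_ind; [exact: submodule0|exact: submoduleD|].
by move=> a b Ia /J_int bD; apply: submoduleMr.
Qed.

Lemma iprodDl J : ksubset J (iprod DD J).
Proof. by move=> x Jx; rewrite -[x]mul1r; apply: iprod_mul => //; apply: Dset1. Qed.

Lemma iprodDr J : ksubset J (iprod J DD).
Proof. by move=> x Jx; rewrite -[x]mulr1; apply: iprod_mul => //; apply: Dset1. Qed.

Lemma gen_nil y : gen [::] y <-> y = 0.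
Proof.
split=> [[f ->]|->]; first by rewrite big_ord0.
by exists (fun _ => 0); rewrite big_ord0.
Qed.

Lemma gen_cons x s y : gen (x :: s) y <-> exists a r, gen s r /\ y = emb a * x + r.
Proof.
split=> [[f ->]|[a [r [[f ->] ->]]]].
- exists (f 0%N), (\sum_(i < size s) emb (f i.+1) * s`_i); split.
  + by exists (fun i => f i.+1).
  + by rewrite /= big_ord_recl.
- by exists (fun i => if i is j.+1 then f j else a); rewrite /= big_ord_recl.
Qed.

Lemma gen_submodule s : submodule (gen s).
Proof.
elim: s => [|x s [s0 sD sM]].
  split; first by apply/gen_nil.
  - by move=> y z /gen_nil -> /gen_nil ->; apply/gen_nil; rewrite addr0.
  - by move=> a y /gen_nil ->; apply/gen_nil; rewrite mulr0.
split.
- by apply/gen_cons; exists 0, 0; rewrite rmorph0 mul0r addr0.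
- move=> _ _ /gen_cons [a [r [sr ->]]] /gen_cons [b [r' [sr' ->]]].
  apply/gen_cons; exists (a + b), (r + r'); split; first exact: sD.
  by rewrite rmorphD mulrDl addrACA.
- move=> c _ /gen_cons [a [r [sr ->]]]; apply/gen_cons.
  exists (c * a), (emb c * r); split; first exact: sM.
  by rewrite rmorphM mulrDr mulrA.
Qed.

Lemma gen0 s : gen s 0. Proof. exact: submodule0 (gen_submodule s). Qed.

Lemma gen_mem s x : In x s -> gen s x.
Proof.
elim: s => [|y s IH] //= [<-|sx]; apply/gen_cons.
- by exists 1, 0; rewrite rmorph1 mul1r addr0; split=> //; apply: gen0.
- by exists 0, x; rewrite rmorph0 mul0r add0r; split => //; apply: IH.
Qed.

Lemma gen_sub X s : submodule X -> (forall x, In x s -> X x) -> ksubset (gen s) X.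
Proof.
move=> X_sub; elim: s => [|x s IH] sX y; first by move/gen_nil => ->; apply: submodule0.
move/gen_cons => [a [r [sr ->]]]; apply: submoduleD => //.
- by apply: submoduleM => //; [apply: Dset_tofrac|apply: sX; left].
- by apply: IH => // z sz; apply: sX; right.
Qed.

Lemma gen_int_submodule s : (forall x, In x s -> Dset x) -> int_submodule (gen s).
Proof. by move=> sD; split; [exact: gen_submodule|exact: (gen_sub Dset_submodule sD)]. Qed.

Lemma gen_cat s t : gen (s ++ t) = isum (gen s) (gen t).
Proof.
apply: ksubset_antisym.
- apply: gen_sub; first by apply: isum_submodule; apply: gen_submodule.
  by move=> x /(in_app_or s t x) [] /gen_mem; [apply: isum_subl|apply: isum_subr]; apply: gen0.
- by apply: isum_sub; [exact: gen_submodule|..]; apply: gen_sub;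
    (try exact: gen_submodule) => x hx; apply: gen_mem; apply: in_or_app; auto.
Qed.

Lemma gen_seq1 x : gen [:: x] = principal x.
Proof.
apply: kset_ext => y; split=> [/gen_cons [a [r [/gen_nil -> ->]]]|[a ->]].
  by exists a; rewrite addr0.
by apply/gen_cons; exists a, 0; rewrite addr0; split=> //; apply/gen_nil.
Qed.

Lemma principal_int_submodule x : Dset x -> int_submodule (principal x).
Proof. by move=> xD; rewrite -gen_seq1; apply: gen_int_submodule => y [<-|[]]. Qed.

Lemma principal_mem x : principal x x.
Proof. by exists 1; rewrite rmorph1 mul1r. Qed.

Lemma principal_int_ideal x : Dset x -> x != 0 -> int_ideal (principal x).
Proof.
move=> xD x_nz; have [? ?] := principal_int_submodule xD.
by split=> //; exists x; split=> //; apply: principal_mem.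
Qed.

Lemma gen_denom s : exists2 d : D, d != 0 & forall y, gen s y -> Dset (emb d * y).
Proof.
elim: s => [|x s [d d_nz sd]].
  by exists 1; [apply: oner_neq0|move=> y /gen_nil ->; rewrite mulr0; apply: Dset0].
have [e e_nz ex] := Dset_denom x.
exists (e * d); first exact: mulf_neq0.
move=> _ /gen_cons [a [r [sr ->]]]; rewrite mulrDr rmorphM; apply: DsetD.
- by rewrite [emb e * _]mulrC mulrACA; do 2![apply: DsetM => //]; apply: Dset_tofrac.
- by rewrite -mulrA; apply: DsetM; [exact: Dset_tofrac|exact: sd].
Qed.

Lemma fg_ideal_frac J : fg_ideal J -> frac_ideal J.
Proof.
move=> [s [-> J_nz]]; split=> //; first exact: gen_submodule.
by have [d d_nz sd] := gen_denom s; exists d.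
Qed.

Fixpoint seq_mul s t : seq K :=
  if s is x :: s' then map (fun y => x * y) t ++ seq_mul s' t else [::].

Lemma seq_mulP s t z : In z (seq_mul s t) <-> exists x y, [/\ In x s, In y t & z = x * y].
Proof.
elim: s => [|x s IH] /=; first by split=> // -[? [? []]].
rewrite in_app_iff in_map_iff IH; split.
- by move=> [[y [<- ty]]|[x' [y [sx' ty ->]]]]; [exists x, y|exists x', y]; split; auto.
- move=> [x' [y [[<-|sx'] ty ->]]]; [left; exists y|right; exists x', y]; split => //.
Qed.

Lemma gen_seq_mul s t : gen (seq_mul s t) = iprod (gen s) (gen t).
Proof.
have gs := gen_submodule; apply: ksubset_antisym.
  apply: gen_sub; first exact: iprod_submodule.
  by move=> _ /seq_mulP [x [y [sx ty ->]]]; apply: iprod_mul; apply: gen_mem.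
apply: iprod_ind; [exact: submodule0|exact: submoduleD|] => a b + tb.
apply: (@gen_sub (fun a => gen (seq_mul s t) (a * b))) => [|x sx].
  split=> [|x y|c x]; rewrite ?mul0r ?mulrDl -?mulrA; first exact: submodule0.
    exact: submoduleD.
  by apply: submoduleM => //; apply: Dset_tofrac.
move: b tb; apply: (@gen_sub (fun b => gen (seq_mul s t) (x * b))) => [|y ty].
  split=> [|y z|c y]; rewrite ?mulr0 ?mulrDr ?[x * (_ * _)]mulrCA; first exact: submodule0.
    exact: submoduleD.
  by apply: submoduleM => //; apply: Dset_tofrac.
by apply: gen_mem; apply/seq_mulP; exists x, y.
Qed.

End IdealArithmetic.

Arguments Dset0 {D}.
Arguments Dset1 {D}.
Arguments Dset_submodule {D}.
Arguments Dset_int_ideal {D}.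

Section StarIdeals.
Variable D : idomainType.
Local Notation emb := (@FracField.tofrac D).
Local Notation kset := (kset D).
Local Notation DD := (@Dset D).
Implicit Types (I J L X : kset) (x y z : {fraction D}) (s t : seq {fraction D})
  (l : seq kset).
Variable star : kset -> kset.
Hypothesis Hstar : star_op star.
Hypothesis Hfc : finite_character star.
Local Notation homog := (star_homog star).

Lemma star_Dset : star DD = DD.
Proof. by case: Hstar => _ [star_pr _ _ _ _]; rewrite Dset_principal1 star_pr ?oner_neq0. Qed.

Lemma star_sub I : int_ideal I -> ksubset I (star I).
Proof. by case: Hstar => _ [_ _ + _ _] /int_ideal_frac; apply. Qed.

Lemma starS I J : int_ideal I -> int_ideal J -> ksubset I J -> ksubset (star I) (star J).
Proof. by case: Hstar => _ [_ _ _ + _] /int_ideal_frac + /int_ideal_frac; apply. Qed.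

Lemma star_idem I : int_ideal I -> star (star I) = star I.
Proof. by case: Hstar => _ [_ _ _ _ +] /int_ideal_frac; apply. Qed.

Lemma star_integral I : int_ideal I -> integral (star I).
Proof.
move=> I_id y /(starS I_id Dset_int_ideal); rewrite star_Dset; apply.
by case: I_id.
Qed.

Lemma star_int_ideal I : int_ideal I -> int_ideal (star I).
Proof.
move=> I_id; have [star_frac _] := Hstar; have [? ? _] := star_frac _ (int_ideal_frac I_id).
by split => //; exact: star_integral.
Qed.

Lemma star_star_ideal I : int_ideal I -> star_ideal star (star I).
Proof. by move=> I_id; split; [apply/int_ideal_frac/star_int_ideal|apply: star_idem]. Qed.

Lemma star_min I X : int_ideal I -> int_ideal X -> star X = X -> ksubset I X ->
  ksubset (star I) X.
Proof. by move=> I_id X_id sX IX; rewrite -sX; apply: starS. Qed.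

Lemma star_iprod_subl I J : int_ideal I -> star I = I -> int_ideal J ->
  ksubset (star (iprod I J)) I.
Proof.
move=> I_id sI J_id; have [I_sub _ _] := I_id; have [_ J_int _] := J_id.
by apply: star_min => //; [exact: iprod_int_ideal|exact: iprod_subl].
Qed.

Lemma star_neD_sub I J : int_ideal I -> int_ideal J -> ksubset I J ->
  star J <> DD -> star I <> DD.
Proof.
move=> I_id J_id IJ sJ sI; apply: sJ; apply: ksubset_antisym; first exact: star_integral.
by rewrite -sI; apply: starS.
Qed.

Lemma kscale_int_ideal a J : Dset a -> a != 0 -> int_ideal J -> int_ideal (kscale a J).
Proof.
move=> aD a_nz [J_sub J_int [x [Jx x_nz]]]; split.
- split.
  + by exists 0; rewrite mulr0; split => //; apply: submodule0.
  + move=> _ _ [z [Jz ->]] [z' [Jz' ->]]; exists (z + z'); rewrite mulrDr.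
    by split => //; apply: submoduleD.
  + move=> c _ [z [Jz ->]]; exists (emb c * z); rewrite mulrCA.
    by split => //; apply: submoduleM => //; apply: Dset_tofrac.
- by move=> _ [z [/J_int zD ->]]; apply: DsetM.
- by exists (a * x); split; [exists x|apply: mulf_neq0].
Qed.

(* A product a b with a in I and b in J^* lies in a J^* = (a J)^*, by the scaling axiom. *)
Lemma iprod_star_sub I J : int_ideal I -> int_ideal J ->
  ksubset (iprod I (star J)) (star (iprod I J)).
Proof.
move=> I_id J_id; have [IJ_sub _ _] := star_int_ideal (iprod_int_ideal I_id J_id).
apply: iprod_ind; [exact: submodule0|exact: submoduleD|] => a b Ia Jb.
have [/eqP ->|a_nz] := boolP (a == 0); first by rewrite mul0r; apply: submodule0.
have aD : Dset a by case: I_id => _ + _; apply.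
have [_ [_ star_scale _ _ _]] := Hstar.
have : kscale a (star J) (a * b) by exists b.
rewrite -star_scale //; last exact: int_ideal_frac.
apply: starS; [exact: kscale_int_ideal|exact: iprod_int_ideal|].
by move=> _ [z [Jz ->]]; apply: iprod_mul.
Qed.

Lemma star_iprod_starr I J : int_ideal I -> int_ideal J ->
  star (iprod I (star J)) = star (iprod I J).
Proof.
move=> I_id J_id; have IJ_id := iprod_int_ideal I_id J_id.
have IJs_id := iprod_int_ideal I_id (star_int_ideal J_id).
apply: ksubset_antisym.
- apply: star_min; [done|exact: star_int_ideal|exact: star_idem|exact: iprod_star_sub].
- by apply: starS => //; apply: iprodS => //; apply: star_sub.
Qed.

Lemma star_iprod_starl I J : int_ideal I -> int_ideal J ->
  star (iprod (star I) J) = star (iprod I J).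
Proof. by move=> I_id J_id; rewrite iprodC star_iprod_starr // iprodC. Qed.

Lemma star_isum_starl I J : int_ideal I -> int_submodule J ->
  star (isum (star I) J) = star (isum I J).
Proof.
move=> I_id J_ism; have IJ_id := isum_int_ideal I_id J_ism.
have IJs_id := isum_int_ideal (star_int_ideal I_id) J_ism.
have [IJ_sub _ _] := star_int_ideal IJ_id; have [J_sub _] := J_ism.
have [I_sub _ _] := I_id.
apply: ksubset_antisym.
- apply: star_min => //; [exact: star_int_ideal|exact: star_idem|].
  apply: isum_sub => //.
  + by apply: starS => //; apply: isum_subl; apply: submodule0.
  + by move=> y Jy; apply: star_sub => //; apply: isum_subr => //; apply: submodule0.
- by apply: starS => //; apply: isumS => //; apply: star_sub.
Qed.

Lemma star_iprod_eqD X Y : int_ideal X -> int_ideal Y -> star X = DD -> star Y = DD ->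
  star (iprod X Y) = DD.
Proof.
move=> X_id Y_id sX sY; have DD_id := iprod_int_ideal Dset_int_ideal Dset_int_ideal.
rewrite -star_iprod_starl // -star_iprod_starr //; last exact: star_int_ideal.
rewrite sX sY; apply: ksubset_antisym; first exact: star_integral.
by rewrite -{1}star_Dset; apply: starS => //; [exact: Dset_int_ideal|exact: iprodDl].
Qed.

Lemma homog_int_ideal I : homog I -> int_ideal I.
Proof. by case=> [[[? ? _] _] ? _ _ _]. Qed.

Lemma homog_star I : homog I -> star I = I.
Proof. by case=> [[_ ->]]. Qed.

Lemma homog_neD I : homog I -> I <> DD.
Proof. by case. Qed.

Lemma homog_gen I : homog I -> exists2 s, int_ideal (gen s) & I = star (gen s).
Proof.
move=> hI; have [_ I_int _] := homog_int_ideal hI.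
case: hI => _ _ [_ [J [J_fg defI]]] _ _; have [s [defJ J_nz]] := J_fg.
have [_ [_ _ star_ext _ _]] := Hstar.
exists s; last by rewrite defI defJ.
split; [exact: gen_submodule| |by rewrite -defJ].
by rewrite -defJ => y /(star_ext _ (fg_ideal_frac J_fg)); rewrite -defI; apply: I_int.
Qed.

(* The ideals [L] quantified over in the definition of a *-homog ideal [I]. *)
Definition ft_over I L :=
  [/\ star_ideal star L, finite_type star L, proper_integral L & ksubset I L].

Lemma homog_ft_over I L L' :
  homog I -> ft_over I L -> ft_over I L' -> star (isum L L') <> DD.
Proof. by case=> _ _ _ _ hI [? ? ? ?] [? ? ? ?]; apply: hI. Qed.

Lemma star_isum_gen_ft_over I t : homog I -> (forall x, In x t -> Dset x) ->
  star (isum I (gen t)) <> DD -> ft_over I (star (isum I (gen t))).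
Proof.
move=> hI tD S_neD; have I_id := homog_int_ideal hI.
have S_id := isum_int_ideal I_id (gen_int_submodule tD).
split; [exact: star_star_ideal| | |].
- split; first exact: star_star_ideal.
  have [s s_id defI] := homog_gen hI; have [_ _ [x [sx x_nz]]] := s_id.
  exists (gen (s ++ t)); split.
    exists (s ++ t); split=> //; exists x; split=> //; rewrite gen_cat.
    exact: (isum_subl (gen0 t)).
  by rewrite gen_cat {1}defI star_isum_starl //; apply: gen_int_submodule.
- by split=> //; exact: star_integral.
- by move=> y Iy; apply: star_sub => //; apply: (isum_subl (gen0 t)).
Qed.

(* The paper's M_I: it is the unique maximal *-ideal containing I. *)
Definition maxideal I : kset := fun x => Dset x /\ star (isum I (principal x)) <> DD.

Lemma maxideal_integral I : integral (maxideal I). Proof. by move=> x []. Qed.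

Lemma isum_principal_int_ideal I x : int_ideal I -> Dset x -> int_ideal (isum I (principal x)).
Proof. by move=> I_id xD; apply: isum_int_ideal => //; apply: principal_int_submodule. Qed.

(* Homogeneity is used exactly here: it makes M_I closed under sums. *)
Lemma star_isum_gen_neD I t : homog I -> (forall x, In x t -> maxideal I x) ->
  star (isum I (gen t)) <> DD.
Proof.
move=> hI; have I_id := homog_int_ideal hI; have [I_sub _ _] := I_id.
have gen_id t' : (forall x, In x t' -> Dset x) -> int_ideal (isum I (gen t')).
  by move=> t'D; apply: isum_int_ideal => //; apply: gen_int_submodule.
elim: t => [|x t IH] tM.
  apply: (star_neD_sub (gen_id _ _) I_id); [by []| |by rewrite homog_star //; apply: homog_neD].
  by apply: isum_sub => // y /gen_nil ->; apply: submodule0.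
have tD y : In y t -> Dset y by move=> /(fun h => tM y (or_intror h)) [].
have [xD x_neD] := tM x (or_introl erefl); rewrite -gen_seq1 in x_neD.
have x1D y : In y [:: x] -> Dset y by move=> [<-|[]].
have xtD y : In y (x :: t) -> Dset y by move=> [<-|/tD].
have fx := star_isum_gen_ft_over hI x1D x_neD.
have ft := star_isum_gen_ft_over hI tD (IH (fun y ty => tM y (or_intror ty))).
apply: (star_neD_sub (gen_id _ xtD) _ _ (homog_ft_over hI fx ft)).
  apply: isum_int_ideal; last apply: int_ideal_submodule;
    by apply: star_int_ideal; apply: gen_id.
move=> _ [i [_ [Ii /gen_cons [a [r [tr ->]]] ->]]].
exists (i + emb a * x), r; rewrite addrA; split => //.
- apply: star_sub; first exact: gen_id.
  by exists i, (emb a * x); split=> //; rewrite gen_seq1; exists a.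
- apply: star_sub; first exact: gen_id.
  by apply: isum_subr => //; apply: submodule0.
Qed.

Lemma maxideal_gen I t y : homog I -> (forall x, In x t -> maxideal I x) -> gen t y ->
  maxideal I y.
Proof.
move=> hI tM ty; have I_id := homog_int_ideal hI.
have tD x : In x t -> Dset x by move=> /tM [].
have yD : Dset y by apply: (gen_sub Dset_submodule tD).
split=> //; apply: (star_neD_sub _ _ _ (star_isum_gen_neD hI tM)).
- exact: isum_principal_int_ideal.
- by apply: isum_int_ideal => //; apply: gen_int_submodule.
- apply: isumS => //; rewrite -gen_seq1; apply: gen_sub; first exact: gen_submodule.
  by move=> x [<-|[]].
Qed.

Lemma maxideal_submodule I : homog I -> submodule (maxideal I).
Proof.
move=> hI; split=> [|x y Mx My|c x Mx].
- by apply: (@maxideal_gen _ [::]) => //; apply/gen_nil.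
- apply: (@maxideal_gen _ [:: x; y]) => //; first by move=> z [<-|[<-|[]]].
  by apply: submoduleD; [exact: gen_submodule|apply: gen_mem; left|apply: gen_mem; right; left].
- apply: (@maxideal_gen _ [:: x]) => //; first by move=> z [<-|[]].
  by rewrite gen_seq1; exists c.
Qed.

Lemma star_ideal_sub_maxideal I L : homog I -> int_ideal L -> star L = L -> L <> DD ->
  ksubset I L -> ksubset L (maxideal I).
Proof.
move=> hI L_id sL L_neD IL x Lx; have [L_sub L_int _] := L_id.
have xD := L_int x Lx; split=> //.
apply: (star_neD_sub (isum_principal_int_ideal (homog_int_ideal hI) xD) L_id); last by rewrite sL.
apply: isum_sub => // _ [a ->].
by apply: submoduleM => //; apply: Dset_tofrac.
Qed.

Lemma sub_maxideal I : homog I -> ksubset I (maxideal I).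
Proof.
move=> hI; apply: star_ideal_sub_maxideal => //;
  [exact: homog_int_ideal|exact: homog_star|exact: homog_neD].
Qed.

Lemma maxideal_int_ideal I : homog I -> int_ideal (maxideal I).
Proof.
move=> hI; split; [exact: maxideal_submodule|exact: maxideal_integral|].
have [_ _ [x [Ix x_nz]]] := homog_int_ideal hI.
by exists x; split => //; apply: sub_maxideal.
Qed.

Lemma maxideal_not1 I : homog I -> ~ maxideal I 1.
Proof.
move=> hI [_]; apply; have [I_sub _ _] := homog_int_ideal hI.
have S_id := isum_principal_int_ideal (homog_int_ideal hI) (@Dset1 D).
apply: ksubset_antisym; first exact: star_integral.
move=> y Dy; apply: star_sub => //; apply: isum_subr; first exact: submodule0.
by rewrite -Dset_principal1.
Qed.

Lemma maxideal_neD I : homog I -> maxideal I <> DD.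
Proof. by move=> hI M_D; apply: (maxideal_not1 hI); rewrite M_D; apply: Dset1. Qed.

(* Finite character reduces [M_I^* ⊆ M_I] to finitely generated [J ⊆ M_I]. *)
Lemma maxideal_star I : homog I -> star (maxideal I) = maxideal I.
Proof.
move=> hI; have M_id := maxideal_int_ideal hI; have I_id := homog_int_ideal hI.
apply: ksubset_antisym; last exact: star_sub.
move=> y; rewrite (Hfc (int_ideal_frac M_id)) => -[_ [[s [-> s_nz]] sM sy]].
have sM' x : In x s -> maxideal I x by move/gen_mem; apply: sM.
have sD x : In x s -> Dset x by move/sM' => [].
have s_id : int_ideal (gen s).
  by have [? ?] := gen_int_submodule sD; split.
have S_id := isum_int_ideal I_id (gen_int_submodule sD).
have yD : Dset y by apply: (star_integral s_id).
split=> //.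
apply: (star_neD_sub (isum_principal_int_ideal I_id yD) (star_int_ideal S_id)); last first.
  by rewrite star_idem //; apply: star_isum_gen_neD.
have [S_sub _ _] := star_int_ideal S_id; apply: isum_sub => //.
- by move=> x Ix; apply: star_sub => //; apply: isum_subl => //; apply: gen0.
- move=> _ [a ->]; apply: submoduleM => //; first exact: Dset_tofrac.
  apply: (starS s_id S_id) => //.
  by apply: isum_subr => //; apply: submodule0; case: I_id.
Qed.

Lemma maxideal_sub I J : homog I -> homog J -> ksubset I (maxideal J) ->
  ksubset (maxideal J) (maxideal I).
Proof.
move=> hI hJ; apply: star_ideal_sub_maxideal => //;
  [exact: maxideal_int_ideal|exact: maxideal_star|exact: maxideal_neD].
Qed.

Lemma maxideal_eq I J : homog I -> homog J -> ksubset I (maxideal J) ->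
  maxideal I = maxideal J.
Proof.
move=> hI hJ IMJ; have MJ_MI := maxideal_sub hI hJ IMJ.
apply: ksubset_antisym => //; apply: maxideal_sub => //.
by move=> x /(sub_maxideal hJ) /MJ_MI.
Qed.

(* If a, b are outside M_I then (I + abD)^* contains ((I + aD)(I + bD))^* = D. *)
Lemma maxideal_prime I a b : homog I -> Dset a -> Dset b -> maxideal I (a * b) ->
  maxideal I a \/ maxideal I b.
Proof.
move=> hI aD bD [_ ab_neD]; apply: NNPP => a_b_nM; apply: ab_neD.
have I_id := homog_int_ideal hI; have [I_sub I_int _] := I_id.
have sA : star (isum I (principal a)) = DD by apply: NNPP => h; apply: a_b_nM; left.
have sB : star (isum I (principal b)) = DD by apply: NNPP => h; apply: a_b_nM; right.
have A_id := isum_principal_int_ideal I_id aD; have B_id := isum_principal_int_ideal I_id bD.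
have AB_id := isum_principal_int_ideal I_id (DsetM aD bD); have [AB_sub _ _] := AB_id.
apply: ksubset_antisym; first exact: star_integral.
rewrite -(star_iprod_eqD A_id B_id sA sB); apply: starS => //; first exact: iprod_int_ideal.
apply: iprod_ind; [exact: submodule0|exact: submoduleD|].
move=> _ _ [i [_ [Ii [c ->] ->]]] [i' [_ [Ii' [e ->] ->]]].
exists (i * (i' + emb e * b) + emb c * a * i'), (emb (c * e) * (a * b)); split.
- apply: submoduleD => //.
    by apply: submoduleMr => //; apply/DsetD/DsetM/bD/Dset_tofrac/I_int.
  by apply: submoduleM => //; apply/DsetM/aD/Dset_tofrac.
- by exists (c * e).
- by rewrite rmorphM; ring.
Qed.

Lemma maxideal_eq_noncomax I J : homog I -> homog J -> star (isum I J) <> DD ->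
  maxideal I = maxideal J.
Proof.
move=> hI hJ IJ_neD; have I_id := homog_int_ideal hI; have J_id := homog_int_ideal hJ.
have S_id := isum_int_ideal I_id (int_ideal_submodule J_id).
have [I_sub _ _] := I_id; have [J_sub _ _] := J_id.
apply: maxideal_eq => // x Ix.
apply: (star_ideal_sub_maxideal hJ (star_int_ideal S_id) (star_idem S_id) IJ_neD).
- by move=> y Jy; apply: star_sub => //; apply: isum_subr => //; apply: submodule0.
- by apply: star_sub => //; apply: isum_subl => //; apply: submodule0.
Qed.

Lemma noncomax_sub_maxideal J L : homog J -> homog L -> ksubset L (maxideal J) ->
  star (isum J L) <> DD.
Proof.
move=> hJ hL LM; have J_id := homog_int_ideal hJ; have L_id := homog_int_ideal hL.
apply: (star_neD_sub _ (maxideal_int_ideal hJ)).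
- by apply: isum_int_ideal => //; apply: int_ideal_submodule.
- by apply: isum_sub => //; [apply: maxideal_submodule|apply: sub_maxideal].
- by rewrite maxideal_star //; apply: maxideal_neD.
Qed.

(* J = (J (I + xD))^* and J (I + xD) ⊆ I J + x D ⊆ L. *)
Lemma comax_iprod_sub I J L x : int_ideal I -> int_ideal J -> int_ideal L -> star L = L ->
  ksubset (iprod I J) L -> L x -> star (isum I (principal x)) = DD -> ksubset J L.
Proof.
move=> I_id J_id L_id sL IJL Lx sX y Jy.
have [L_sub L_int _] := L_id; have [_ J_int _] := J_id.
have X_id := isum_principal_int_ideal I_id (L_int x Lx).
have : star (iprod J (star (isum I (principal x)))) y.
  rewrite sX; apply: star_sub; [exact: iprod_int_ideal J_id Dset_int_ideal|exact: iprodDr].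
rewrite star_iprod_starr // -sL; apply: starS => //; first exact: iprod_int_ideal.
apply: iprod_ind; [exact: submodule0|exact: submoduleD|].
move=> v _ Jv [i [_ [Ii [c ->] ->]]]; rewrite mulrDr; apply: submoduleD => //.
- by apply: IJL; rewrite mulrC; apply: iprod_mul.
- rewrite mulrCA; apply: submoduleM => //; first exact: Dset_tofrac.
  by apply: submoduleM => //; apply: J_int.
Qed.

Lemma ft_over_int_ideal I L : ft_over I L -> int_ideal L.
Proof. by case=> [[[? ? _] _] _ [? _] _]. Qed.

Lemma star_iprod_finite_type I J : homog I -> homog J -> finite_type star (star (iprod I J)).
Proof.
move=> hI hJ; have [s s_id ->] := homog_gen hI; have [t t_id ->] := homog_gen hJ.
split; first by apply: star_star_ideal; apply: iprod_int_ideal; apply: star_int_ideal.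
exists (gen (seq_mul s t)); split.
- by exists (seq_mul s t); split=> //; rewrite gen_seq_mul; case: (iprod_int_ideal s_id t_id).
- by rewrite star_iprod_starl ?star_iprod_starr ?gen_seq_mul //; apply: star_int_ideal.
Qed.

Lemma star_iprod_homog I J : homog I -> homog J -> star (isum I J) <> DD ->
  homog (star (iprod I J)) /\ maxideal (star (iprod I J)) = maxideal I.
Proof.
move=> hI hJ IJ_neD; have I_id := homog_int_ideal hI; have J_id := homog_int_ideal hJ.
have IJ_id := iprod_int_ideal I_id J_id; have [I_sub I_int _] := I_id.
have [_ J_int _] := J_id; set P := star (iprod I J).
have P_I : ksubset P I by apply: star_iprod_subl => //; exact: homog_star.
have MI_MJ := maxideal_eq_noncomax hI hJ IJ_neD.
have ft_sub L : ft_over P L -> ksubset L (maxideal I).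
  move=> PL x Lx; have L_id := ft_over_int_ideal PL.
  have [[_ sL] _ [_ L_neD] P_L] := PL; have [_ L_int _] := L_id.
  have [//|x_nM] := classic (maxideal I x).
  have sX : star (isum I (principal x)) = DD.
    by apply: NNPP => h; apply: x_nM; split=> //; apply: L_int.
  have JL : ksubset J L.
    by apply: (comax_iprod_sub I_id J_id L_id sL _ Lx sX) => y IJy; apply/P_L/star_sub.
  by rewrite MI_MJ; apply: (star_ideal_sub_maxideal hJ L_id sL L_neD JL).
have hP : homog P.
  split; [exact: star_star_ideal|exact: star_integral|exact: star_iprod_finite_type| |].
  - move=> P_D; apply: (homog_neD hI); apply: ksubset_antisym => //.
    by rewrite -P_D.
  - move=> L L' sL sL' fL fL' pL pL' PL PL'.
    have ftL : ft_over P L by split.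
    have ftL' : ft_over P L' by split.
    have LL'_id := isum_int_ideal (ft_over_int_ideal ftL)
                     (int_ideal_submodule (ft_over_int_ideal ftL')).
    apply: (star_neD_sub LL'_id (maxideal_int_ideal hI)).
    + by apply: isum_sub; [apply: maxideal_submodule|apply: ft_sub ftL|apply: ft_sub ftL'].
    + by rewrite maxideal_star //; apply: maxideal_neD.
split=> //; apply: maxideal_eq => // x /P_I.
exact: sub_maxideal.
Qed.

Local Notation comax := (star_comax star).
Local Notation all_homog l := (forall J, In J l -> homog J).

Lemma star_comaxC I J : comax I J -> comax J I.
Proof. by rewrite /star_comax isumC. Qed.

Lemma homog_not_comax_self J : homog J -> ~ comax J J.
Proof.
move=> hJ; have J_id := homog_int_ideal hJ; have [J_sub _ _] := J_id.
apply: (star_neD_sub _ J_id); last by rewrite homog_star //; apply: homog_neD.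
- by apply: isum_int_ideal => //; apply: int_ideal_submodule.
- exact: isum_sub.
Qed.

Lemma iprodl_perm l l' : Permutation l l' -> iprodl l = iprodl l'.
Proof.
elim=> //= [x l1 l2 _ ->|x y l0|l1 l2 l3 _ -> _ ->] //.
by rewrite -!iprodA (iprodC y x).
Qed.

Lemma iprodl_int_ideal l : all_homog l -> int_ideal (iprodl l).
Proof.
elim: l => [|J l IH] /= hl; first exact: Dset_int_ideal.
by apply: iprod_int_ideal; [apply/homog_int_ideal/hl; left|apply: IH => I hI; apply: hl; right].
Qed.

Lemma all_homog_perm_cons J l rest : all_homog l -> Permutation l (J :: rest) -> all_homog rest.
Proof. by move=> hl pl R hR; apply: hl; apply: Permutation_in (Permutation_sym pl) _; right. Qed.

(* Multiplying I into a factor J it is not comaximal with keeps the factors pairwise comaximal,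
   because the product has the same maximal *-ideal as J. *)
Lemma star_iprod_merge I Js : homog I -> all_homog Js -> ForallOrdPairs comax Js ->
  exists Js', [/\ all_homog Js', ForallOrdPairs comax Js' &
                  star (iprodl Js') = star (iprod I (iprodl Js))].
Proof.
move=> hI hJs Js_comax.
have [[J [Js_J IJ_neD]]|all_comax] :=
  classic (exists J, In J Js /\ star (isum I J) <> DD); last first.
  exists (I :: Js); split=> //; first by move=> R [<-|/hJs].
  apply/ForallOrdPairs_consE; split=> // J Js_J.
  by apply: NNPP => IJ_neD; apply: all_comax; exists J.
have hJ := hJs J Js_J; have [rest perm] := In_Permutation_cons Js_J.
have hrest := all_homog_perm_cons hJs perm.
have /ForallOrdPairs_consE [J_rest rest_comax] := ForallOrdPairs_perm star_comaxC perm Js_comax.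
have [hP MP_MI] := star_iprod_homog hI hJ IJ_neD.
have MI_MJ := maxideal_eq_noncomax hI hJ IJ_neD.
exists (star (iprod I J) :: rest); split.
- by move=> R [<-|/hrest].
- apply/ForallOrdPairs_consE; split=> // R rest_R; apply: NNPP => PR_neD; have hR := hrest R rest_R.
  apply: (noncomax_sub_maxideal hJ hR) (J_rest R rest_R).
  by rewrite -MI_MJ -MP_MI (maxideal_eq_noncomax hP hR PR_neD); apply: sub_maxideal.
- have I_id := homog_int_ideal hI; have J_id := homog_int_ideal hJ.
  rewrite /= star_iprod_starl ?iprodA ?(iprodl_perm perm) //; first exact: iprod_int_ideal.
  exact: iprodl_int_ideal.
Qed.

Lemma homog_factorization Is : all_homog Is ->
  exists Js, [/\ all_homog Js, ForallOrdPairs comax Js & star (iprodl Js) = star (iprodl Is)].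
Proof.
elim: Is => [|I Is IH] hIs; first by exists [::]; split=> //; constructor.
have hI := hIs I (or_introl erefl); have hIs' : all_homog Is by move=> J hJ; apply: hIs; right.
have [Js0 [hJs0 Js0_comax defJs0]] := IH hIs'.
have [Js [hJs Js_comax defJs]] := star_iprod_merge hI hJs0 Js0_comax.
exists Js; split=> //; rewrite defJs /= -star_iprod_starr ?defJs0 ?star_iprod_starr //;
  by [apply: homog_int_ideal|apply: iprodl_int_ideal].
Qed.

(* x ∈ x (J + yD)^* ⊆ (x J + x y D)^* ⊆ J *)
Lemma star_comax_cancel J x y : int_ideal J -> star J = J -> Dset x -> Dset y ->
  star (isum J (principal y)) = DD -> J (x * y) -> J x.
Proof.
move=> J_id sJ xD yD sY Jxy; have [J_sub J_int _] := J_id.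
have [/eqP ->|x_nz] := boolP (x == 0); first exact: submodule0.
have X_id := principal_int_ideal xD x_nz; have Y_id := isum_principal_int_ideal J_id yD.
have : star (iprod (principal x) (star (isum J (principal y)))) x.
  rewrite sY; apply: star_sub; first exact: iprod_int_ideal X_id Dset_int_ideal.
  by apply: iprodDr; apply: principal_mem.
rewrite star_iprod_starr //; apply: (star_min (iprod_int_ideal X_id Y_id) J_id sJ).
apply: iprod_ind; [exact: submodule0|exact: submoduleD|].
move=> _ _ [a ->] [j [_ [Jj [c ->] ->]]].
have -> : emb a * x * (j + emb c * y) = emb a * (x * j + emb c * (x * y)) by ring.
apply: submoduleM; [done|exact: Dset_tofrac|apply: submoduleD => //].
- by apply: submoduleM.
- by apply: submoduleM => //; apply: Dset_tofrac.
Qed.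

(* The contraction A D_M ∩ D of A along the localization at M. *)
Definition saturation (M A : kset) : kset :=
  fun x => Dset x /\ exists y, [/\ Dset y, ~ M y & A (x * y)].

Lemma iprodl_not_maxideal J rest : homog J -> all_homog rest ->
  (forall R, In R rest -> comax J R) -> exists y, [/\ iprodl rest y, Dset y & ~ maxideal J y].
Proof.
move=> hJ; elim: rest => [|R rest IH] hrest J_rest.
  by exists 1; split; [exact: Dset1|exact: Dset1|exact: maxideal_not1].
have hR := hrest R (or_introl erefl); have [_ R_int _] := homog_int_ideal hR.
have [r [Rr r_nM]] : exists r, R r /\ ~ maxideal J r.
  apply: NNPP => h; apply: (noncomax_sub_maxideal hJ hR); last by apply: J_rest; left.
  by move=> r Rr; apply: NNPP => r_nM; apply: h; exists r.
have [p [rest_p pD p_nM]] := IH (fun R' hR' => hrest R' (or_intror hR'))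
  (fun R' hR' => J_rest R' (or_intror hR')).
exists (r * p); split; [exact: iprod_mul|exact: DsetM (R_int r Rr) pD|].
by move=> /(maxideal_prime hJ (R_int r Rr) pD) [].
Qed.

Lemma homog_eq_saturation J rest : homog J -> all_homog rest ->
  (forall R, In R rest -> comax J R) ->
  J = saturation (maxideal J) (star (iprodl (J :: rest))).
Proof.
move=> hJ hrest J_rest; have J_id := homog_int_ideal hJ; have [_ J_int _] := J_id.
have rest_id := iprodl_int_ideal hrest.
apply: kset_ext => x; split.
- move=> Jx; split; first exact: J_int.
  have [y [rest_y yD y_nM]] := iprodl_not_maxideal hJ hrest J_rest.
  exists y; split=> //; apply: star_sub; first exact: iprod_int_ideal.
  exact: iprod_mul.
- move=> [xD [y [yD y_nM /star_iprod_subl Jxy]]].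
  have sY : star (isum J (principal y)) = DD by apply: NNPP => h; apply: y_nM.
  by apply: (star_comax_cancel J_id (homog_star hJ) xD yD sY); apply: Jxy => //; apply: homog_star.
Qed.

Lemma iprodl_sub_maxideal J Ks : homog J -> all_homog Ks ->
  ksubset (iprodl Ks) (maxideal J) -> exists K, In K Ks /\ ksubset K (maxideal J).
Proof.
move=> hJ; elim: Ks => [|K Ks IH] hKs Ks_M.
  by exfalso; apply: (maxideal_not1 hJ); apply: Ks_M; apply: Dset1.
have [K_M|K_nM] := classic (ksubset K (maxideal J)); first by exists K; split=> //; left.
have [k [Kk k_nM]] : exists k, K k /\ ~ maxideal J k.
  by apply: NNPP => h; apply: K_nM => k Kk; apply: NNPP => k_nM; apply: h; exists k.
have hKs' : all_homog Ks by move=> I hI; apply: hKs; right.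
have [_ K_int _] := homog_int_ideal (hKs K (or_introl erefl)).
have [_ Ks_int _] := iprodl_int_ideal hKs'.
have [K' [Ks_K' K'_M]] : exists K', In K' Ks /\ ksubset K' (maxideal J).
  apply: IH => // p Ks_p.
  by have /(maxideal_prime hJ (K_int k Kk) (Ks_int p Ks_p)) [] := Ks_M _ (iprod_mul Kk Ks_p).
by exists K'; split=> //; right.
Qed.

(* Each factor J is the saturation of the product at M_J, and M_J = M_K for some factor K
   of any other such product. *)
Lemma factor_In Js Ks : all_homog Js -> ForallOrdPairs comax Js ->
  all_homog Ks -> ForallOrdPairs comax Ks ->
  star (iprodl Js) = star (iprodl Ks) -> forall J, In J Js -> In J Ks.
Proof.
move=> hJs Js_comax hKs Ks_comax eJK J Js_J; have hJ := hJs J Js_J.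
have [rest permJ] := In_Permutation_cons Js_J; have hrest := all_homog_perm_cons hJs permJ.
have /ForallOrdPairs_consE [J_rest _] := ForallOrdPairs_perm star_comaxC permJ Js_comax.
have defJ := homog_eq_saturation hJ hrest J_rest; rewrite -(iprodl_perm permJ) in defJ.
have [K [Ks_K K_M]] : exists K, In K Ks /\ ksubset K (maxideal J).
  apply: iprodl_sub_maxideal => // y Ks_y; apply: sub_maxideal => //.
  rewrite (iprodl_perm permJ) /= in eJK.
  apply: (star_iprod_subl (homog_int_ideal hJ) (homog_star hJ) (iprodl_int_ideal hrest)).
  by rewrite eJK; apply: star_sub => //; apply: iprodl_int_ideal.
have hK := hKs K Ks_K; have [restK permK] := In_Permutation_cons Ks_K.
have hrestK := all_homog_perm_cons hKs permK.
have /ForallOrdPairs_consE [K_rest _] := ForallOrdPairs_perm star_comaxC permK Ks_comax.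
have defK := homog_eq_saturation hK hrestK K_rest.
rewrite -(iprodl_perm permK) (maxideal_eq hK hJ K_M) in defK.
by rewrite defJ eJK -defK.
Qed.

Lemma homog_factorization_unique Js Ks : all_homog Js -> ForallOrdPairs comax Js ->
  all_homog Ks -> ForallOrdPairs comax Ks ->
  star (iprodl Js) = star (iprodl Ks) -> Permutation Js Ks.
Proof.
move=> hJs Js_comax hKs Ks_comax eJK; apply: NoDup_Permutation.
- by apply: ForallOrdPairs_NoDup Js_comax => J /hJs /homog_not_comax_self.
- by apply: ForallOrdPairs_NoDup Ks_comax => K /hKs /homog_not_comax_self.
- by move=> J; split; apply: factor_In.
Qed.

End StarIdeals.

Theorem propositionK (D : idomainType) (star : kset D -> kset D)
  (Hstar : star_op star) (Hfc : finite_character star)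
  (A : kset D) (Is : seq (kset D))
  (HIs : forall I, List.In I Is -> star_homog star I)
  (HA : A = star (iprodl Is)) :
  exists Js : seq (kset D),
    [/\ (forall J, List.In J Js -> star_homog star J),
        mutually_comax star Js,
        A = star (iprodl Js) &
        forall Ks : seq (kset D),
          (forall K, List.In K Ks -> star_homog star K) ->
          mutually_comax star Ks ->
          A = star (iprodl Ks) ->
          Permutation Js Ks].
Proof.
have comaxP l := ForallOrdPairs_nthP (@star_comaxC D star) (@Dset D) l.
have [Js [hJs Js_comax defJs]] := homog_factorization Hstar Hfc HIs.
exists Js; split=> //; first exact/comaxP.
- by rewrite HA defJs.
- move=> Ks hKs /comaxP Ks_comax defKs.
  apply: (homog_factorization_unique Hstar Hfc hJs Js_comax hKs Ks_comax).
  by rewrite defJs -HA defKs.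
Qed.
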